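(* Let $G$ be a topological group and $A$ a topological $G$-module. For every $p$, the homomorphism $H(j_h^p)^{-1}\circ H(j_v^p)\colon H_c^p(G,A)\to H_{lc}^p(G,A)$ coincides with the homomorphism induced in cohomology by the inclusion $C_c^*(G,A)\hookrightarrow C_{lc}^*(G,A)$.
   Context: A topological $G$-module is an abelian topological group $A$ with an action of $G$ by group automorphisms such that $G\times A\to A$ is continuous. For an identity neighbourhood $U$ of $G$ put $\Gamma_U^0:=G$ and, for $q\ge1$, $\Gamma_U^q:=\{(g_0,\dots,g_q)\in G^{q+1}\mid g_i^{-1}g_j\in U\ \forall i,j\}$. $G$ acts on maps $f\colon G^{n+1}\to A$ by $(g.f)(g_0,\dots,g_n)=g.f(g^{-1}g_0,\dots,g^{-1}g_n)$, and $df(g_0,\dots,g_{n+1})=\sum_i(-1)^if(g_0,\dots,\widehat{g_i},\dots,g_{n+1})$. $C_c^n(G,A)$ is the complex of continuous equivariant maps $G^{n+1}\to A$ with cohomology $H_c^n(G,A)$; $C_{lc}^n(G,A)$ is the complex of equivariant maps whose restriction to $\Gamma_U^n$ is continuous for some identity neighbourhood $U$, with cohomology $H_{lc}^n(G,A)$. $A_{lc}^{p,q}(G,A)$ is the group of maps $f\colon G^{p+1}\times G^{q+1}\to A$ whose restriction to $G^{p+1}\times\Gamma_U^q$ is continuous for some identity neighbourhood $U$, with $d_hf(x_0,\dots,x_{p+1},\vec y)=\sum_i(-1)^if(x_0,\dots,\widehat{x_i},\dots,x_{p+1},\vec y)$ and $d_vf(\vec x,y_0,\dots,y_{q+1})=(-1)^p\sum_i(-1)^if(\vec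 x,y_0,\dots,\widehat{y_i},\dots,y_{q+1})$; $G$ acts by $(g.f)(\vec x,\vec y)=g.f(g^{-1}\vec x,g^{-1}\vec y)$, and $\mathrm{Tot}\,A_{lc}^{*,*}(G,A)^G$ is the total complex of the fixed-point double complex (differential $d_h+d_v$). $j_h\colon C_{lc}^*(G,A)\to\mathrm{Tot}\,A_{lc}^{*,*}(G,A)^G$, $j_h(f)(x_0,\vec y)=f(\vec y)$, and $j_v\colon C_c^*(G,A)\to\mathrm{Tot}\,A_{lc}^{*,*}(G,A)^G$, $j_v(f)(\vec x,y_0)=f(\vec x)$, are chain maps, and $j_h$ induces an isomorphism $H(j_h^p)$ in cohomology. *)

From HB Require Import structures.
From mathcomp Require Import all_boot all_order all_algebra.
From mathcomp Require Import all_classical all_reals all_analysis.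

Set Implicit Arguments.
Unset Strict Implicit.
Unset Printing Implicit Defensive.

Import GRing.Theory.
Local Open Scope classical_set_scope.
Local Open Scope ring_scope.

Record topGroup := TopGroup {
  tg_sort :> topologicalType;
  tg_mul : tg_sort -> tg_sort -> tg_sort;
  tg_inv : tg_sort -> tg_sort;
  tg_one : tg_sort;
  tg_mulA : associative tg_mul;
  tg_mul1 : left_id tg_one tg_mul;
  tg_mulV : forall x, tg_mul (tg_inv x) x = tg_one;
  tg_mul_cont : continuous (fun z : tg_sort * tg_sort => tg_mul z.1 z.2);
  tg_inv_cont : continuous tg_inv }.

Section Cohomology.
Variables (G : topGroup) (A : topologicalZmodType) (act : G -> A -> A).

Record top_module : Prop := {
  act_add : forall g a b, act g (a + b) = act g a + act g b;
  act_one : forall a, act (tg_one G) a = a;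
  act_mul : forall g h a, act (tg_mul g h) a = act g (act h a);
  act_cont : continuous (fun z : G * A => act z.1 z.2) }.

(** G^(n+1) with the product topology; points are maps 'I_(n+1) -> G. *)
Definition Gpow (n : nat) := {ptws 'I_n.+1 -> G}.

Definition tmul (n : nat) (g : G) (x : Gpow n) : Gpow n :=
  fun i => tg_mul g (x i).

Definition face (n : nat) (i : 'I_n.+2) (x : Gpow n.+1) : Gpow n :=
  fun j => x (lift i j).

Definition cochain (n : nat) := Gpow n -> A.

Definition dcoch (n : nat) (f : cochain n) : cochain n.+1 :=
  fun x => \sum_(i < n.+2) f (face i x) *~ ((-1) ^+ i).

Definition equivariant (n : nat) (f : cochain n) : Prop :=
  forall g x, act g (f (tmul (tg_inv g) x)) = f x.

Definition Cc (n : nat) (f : cochain n) : Prop :=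
  equivariant f /\ continuous f.

Definition Gamma (U : set G) (q : nat) : set (Gpow q) :=
  [set y | forall i j, U (tg_mul (tg_inv (y i)) (y j))].

Definition dcochain (p q : nat) := (Gpow p * Gpow q)%type -> A.

Definition lc_cont (p q : nat) (F : dcochain p q) : Prop :=
  exists U : set G, nbhs (tg_one G) U /\
    {within [set: Gpow p] `*` @Gamma U q, continuous F}.

Definition dfixed (p q : nat) (F : dcochain p q) : Prop :=
  forall g z, act g (F (tmul (tg_inv g) z.1, tmul (tg_inv g) z.2)) = F z.

Definition d_h (p q : nat) (F : dcochain p q) : dcochain p.+1 q :=
  fun z => \sum_(i < p.+2) F (face i z.1, z.2) *~ ((-1) ^+ i).

Definition d_v (p q : nat) (F : dcochain p q) : dcochain p q.+1 :=
  fun z => (\sum_(i < q.+2) F (z.1, face i z.2) *~ ((-1) ^+ i)) *~ ((-1) ^+ p).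

(** Elements of the total complex are families indexed by bidegree (p,q);
    an element of Tot^n is such a family vanishing outside p + q = n. *)
Definition totfam := forall p q : nat, dcochain p q.

Definition totd (F : totfam) : totfam :=
  fun p q z =>
    (match p return dcochain p q with
     | 0 => fun _ => 0
     | p'.+1 => d_h (F p' q) end) z +
    (match q return dcochain p q with
     | 0 => fun _ => 0
     | q'.+1 => d_v (F p q') end) z.

Definition j_v (n : nat) (f : cochain n) : totfam :=
  fun a b z => if (a == n) && (b == 0%N)
               then f (fun i : 'I_n.+1 => z.1 (inord i)) else 0.

Definition j_h (n : nat) (f : cochain n) : totfam :=
  fun a b z => if (a == 0%N) && (b == n)
               then f (fun i : 'I_n.+1 => z.2 (inord i)) else 0.

End Cohomology.

Arguments totd {G A} F p q z.
Arguments j_v {G A n} f p q z.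
Arguments j_h {G A n} f p q z.

From HB Require Import structures.
From mathcomp Require Import all_boot all_order all_algebra.
From mathcomp Require Import all_classical all_reals all_analysis.
From mathcomp Require Import zify.

Set Implicit Arguments.
Unset Strict Implicit.
Unset Printing Implicit Defensive.

Import GRing.Theory.
Local Open Scope classical_set_scope.
Local Open Scope ring_scope.

(* The homotopy between j_v and j_h on a cocycle f of degree p is the
   family F_(a,b)(x, y) = (-1)^(a+1) f(x_0,...,x_a, y_0,...,y_b), a + b + 1 = p,
   obtained by concatenating the two tuples.  In bidegree (a,b) with a + b = p,
   the horizontal part of (d_h + d_v) F collects the faces of the concatenation
   (x, y) that omit an x-coordinate and the vertical part those that omit a
   y-coordinate; by the cocycle identity df(x, y) = 0 they cancel, except on
   the two axes where the missing sum is the single term f(y) (for a = 0) or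
   f(x) (for b = 0).  F is equivariant because f is, and it is even globally
   continuous, so U = G witnesses local continuity. *)

Lemma continuous_ptws (X : topologicalType) (I : Type) (K : topologicalType)
    (h : X -> {ptws I -> K}) :
  (forall i, continuous (fun x => h x i)) -> continuous h.
Proof.
move=> hc x; apply/cvg_sup => i; move: x.
apply/(@continuousP _ (initial_topology (fun f : I -> K => f i))) => B [C oC <-].
rewrite (_ : h @^-1` _ = (fun x => h x i) @^-1` C) //.
by apply: open_comp => // + _; exact: hc.
Qed.

Lemma continuous_zsign (T : topologicalType) (A : topologicalZmodType)
    (h : T -> A) n :
  continuous h -> continuous (fun z => h z *~ ((-1) ^+ n)).
Proof.
move=> ch; rewrite -signr_odd; case: (odd n); rewrite ?expr1 ?expr0.
  under eq_fun => z do rewrite mulrN1z.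
  by move=> z; apply: continuous_comp; [exact: ch | exact: opp_continuous].
by under eq_fun => z do rewrite mulr1z.
Qed.

Lemma zsignK (A : zmodType) (x : A) n : x *~ ((-1) ^+ n) *~ ((-1) ^+ n) = x.
Proof. by rewrite -mulrzA -expr2 sqrr_sign mulr1z. Qed.

Lemma zsignS (A : zmodType) (x : A) n : x *~ ((-1) ^+ n.+1) = - (x *~ ((-1) ^+ n)).
Proof. by rewrite exprS mulN1r mulrNz. Qed.

Section ModuleAction.
Variables (G : topGroup) (A : topologicalZmodType) (act : G -> A -> A).
Hypothesis hA : top_module act.

Lemma act0 g : act g 0 = 0.
Proof. by apply: (@addrI _ (act g 0)); rewrite -act_add // !addr0. Qed.

Lemma actN g x : act g (- x) = - act g x.
Proof. by apply/eqP; rewrite -addr_eq0 -act_add // addNr act0. Qed.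

Lemma act_zsign g x n : act g (x *~ ((-1) ^+ n)) = act g x *~ ((-1) ^+ n).
Proof.
by rewrite -signr_odd; case: (odd n); rewrite ?expr1 ?expr0 ?mulrN1z ?mulr1z ?actN.
Qed.

End ModuleAction.

(* Points of G^(n+1) are handled as sequences nat -> G: [pt_seq] reads the
   coordinates (and returns x_0 beyond n, by [inord]), and [seq_pt n] keeps the
   first n+1 terms.  [catseq c u v] is u_0,...,u_(c-1), v_0, v_1, ... *)
Section Concatenation.
Variable G : topGroup.

Definition pt_seq n (x : Gpow G n) : nat -> G := fun k => x (inord k).

Definition seq_pt n (h : nat -> G) : Gpow G n := fun i => h (val i).
Arguments seq_pt n h : clear implicits.

Definition catseq c (u v : nat -> G) : nat -> G :=
  fun k => if (k < c)%N then u k else v (k - c)%N.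

Lemma eq_seq_pt n (h h' : nat -> G) :
  (forall k, (k <= n)%N -> h k = h' k) -> seq_pt n h = seq_pt n h'.
Proof.
move=> hh'; apply: functional_extensionality_dep => i.
by rewrite /seq_pt hh' // -ltnS (ltn_ord i).
Qed.

Lemma pt_seq_face n (i : 'I_n.+2) (x : Gpow G n.+1) k : (k <= n)%N ->
  pt_seq (face i x) k = pt_seq x (bump i k).
Proof.
move=> kn; rewrite /pt_seq /face; congr x; apply: val_inj => /=.
rewrite !inordK ?ltnS //; rewrite /bump; case: (i <= k)%N; lia.
Qed.

Lemma catseq_bump_lo a k (u v : nat -> G) : (k <= a)%N ->
  (fun j => catseq a.+1 u v (bump k j)) = catseq a (fun j => u (bump k j)) v.
Proof.
move=> ka; apply: funext => j; rewrite /catseq /bump.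
case: (leqP k j) => kj; rewrite ?add1n ?add0n ?ltnS ?subSS //.
have ja : (j < a)%N by lia.
by rewrite ja ltnW.
Qed.

Lemma catseq_bump_hi a m (u v : nat -> G) :
  (fun j => catseq a.+1 u v (bump (m + a.+1) j))
  = catseq a.+1 u (fun j => v (bump m j)).
Proof.
apply: funext => j; rewrite /catseq /bump.
case: (ltnP j a.+1) => ja.
  have -> : (m + a.+1 <= j)%N = false by lia.
  by rewrite add0n ja.
case: (leqP (m + a.+1) j) => mj; rewrite ?add1n ?add0n.
  have -> : (j.+1 < a.+1)%N = false by lia.
  have -> : (m <= j - a.+1)%N by lia.
  by rewrite add1n; congr v; lia.
have -> : (m <= j - a.+1)%N = false by lia.
by rewrite ltnNge ja.
Qed.

Lemma seq_pt_catseq0 n (u v : nat -> G) : seq_pt n (catseq 0 u v) = seq_pt n v.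
Proof. by apply: eq_seq_pt => k _; rewrite /catseq ltn0 subn0. Qed.

Lemma seq_pt_catseq_lo n c (u v : nat -> G) : (n < c)%N ->
  seq_pt n (catseq c u v) = seq_pt n u.
Proof. by move=> nc; apply: eq_seq_pt => k kn; rewrite /catseq (leq_ltn_trans kn nc). Qed.

Lemma seq_pt_catseq_face_lo n a (i : 'I_a.+2) (v : nat -> G) (x : Gpow G a.+1) :
  seq_pt n (catseq a.+1 (pt_seq (face i x)) v)
  = seq_pt n (catseq a.+1 (fun j => pt_seq x (bump i j)) v).
Proof.
apply: eq_seq_pt => k _; rewrite /catseq; case: ifP => // ka.
by rewrite pt_seq_face // -ltnS.
Qed.

Lemma seq_pt_catseq_face_hi n c b (i : 'I_b.+2) (u : nat -> G) (y : Gpow G b.+1) :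
  (n <= c + b)%N ->
  seq_pt n (catseq c u (pt_seq (face i y)))
  = seq_pt n (catseq c u (fun j => pt_seq y (bump i j))).
Proof.
move=> ncb; apply: eq_seq_pt => k kn; rewrite /catseq; case: ifP => // kc.
by rewrite pt_seq_face //; lia.
Qed.

Lemma seq_pt_catseq_tmul n c a b (g : G) (x : Gpow G a) (y : Gpow G b) :
  seq_pt n (catseq c (pt_seq (tmul g x)) (pt_seq (tmul g y)))
  = tmul g (seq_pt n (catseq c (pt_seq x) (pt_seq y))).
Proof.
by apply: functional_extensionality_dep => i; rewrite /seq_pt /tmul /catseq; case: ifP.
Qed.

Lemma continuous_seq_pt_catseq n c a b :
  continuous (fun z : Gpow G a * Gpow G b =>
                seq_pt n (catseq c (pt_seq z.1) (pt_seq z.2))).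
Proof.
apply: continuous_ptws => i; rewrite /seq_pt /catseq; case: (val i < c)%N => z.
  apply: (continuous_comp (f := fst) (g := fun w : Gpow G a => w (inord i))).
    exact: cvg_fst.
  exact: proj_continuous.
apply: (continuous_comp (f := snd) (g := fun w : Gpow G b => w (inord (i - c)))).
  exact: cvg_snd.
exact: proj_continuous.
Qed.

End Concatenation.

Arguments seq_pt {G} n h.

Section Homotopy.
Variables (G : topGroup) (A : topologicalZmodType) (p : nat) (f : cochain G A p).

Definition concat_cochain (a b : nat) : dcochain G A a b := fun z =>
  if ((a + b).+1 == p)%N
  then f (seq_pt p (catseq a.+1 (pt_seq z.1) (pt_seq z.2))) *~ ((-1) ^+ a.+1)
  else 0.
Arguments concat_cochain : clear implicits.

(* For a + b = p these are the two halves of df(u_0..u_a, v_0..v_b). *)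
Definition xface_sum a (u v : nat -> G) : A :=
  \sum_(k < a.+1) f (seq_pt p (catseq a (fun j => u (bump k j)) v)) *~ ((-1) ^+ k).

Definition yface_sum a b (u v : nat -> G) : A :=
  \sum_(m < b.+1) f (seq_pt p (catseq a.+1 u (fun j => v (bump m j)))) *~ ((-1) ^+ m).

Lemma xface_sum0 u v : xface_sum 0 u v = f (seq_pt p v).
Proof. by rewrite /xface_sum big_ord1 seq_pt_catseq0 mulr1z. Qed.

Lemma yface_sum0 a u v : (p <= a)%N -> yface_sum a 0 u v = f (seq_pt p u).
Proof. by move=> pa; rewrite /yface_sum big_ord1 seq_pt_catseq_lo ?ltnS // mulr1z. Qed.

Lemma cocycle_face_sums a b u v : (forall x, dcoch f x = 0) -> (a + b)%N = p ->
  yface_sum a b u v = xface_sum a u v *~ ((-1) ^+ a).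
Proof.
move=> df0 abp.
set F := fun k : nat =>
  f (seq_pt p (fun j => catseq a.+1 u v (bump k j))) *~ ((-1) ^+ k).
have : \sum_(i < p.+2) F i = 0 by rewrite -[RHS](df0 (seq_pt p.+1 (catseq a.+1 u v))).
rewrite -(big_mkord xpredT F) (@big_cat_nat _ _ _ a.+1) //=; last by lia.
rewrite -{2}[a.+1]add0n big_addn (_ : p.+2 - a.+1 = b.+1)%N; last by lia.
have -> : \sum_(0 <= i < a.+1) F i = xface_sum a u v.
  by rewrite big_mkord; apply: eq_bigr => k _; rewrite /F catseq_bump_lo // -ltnS.
have -> : \sum_(0 <= i < b.+1) F (i + a.+1)%N = yface_sum a b u v *~ ((-1) ^+ a.+1).
  rewrite big_mkord mulrz_suml; apply: eq_bigr => m _.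
  by rewrite /F catseq_bump_hi exprD mulrzA.
by move/eqP; rewrite addr_eq0 zsignS opprK => /eqP ->; rewrite zsignK.
Qed.

Lemma d_h_concat_cochain a b z : (a.+1 + b)%N = p ->
  d_h (concat_cochain a b) z
  = xface_sum a.+1 (pt_seq z.1) (pt_seq z.2) *~ ((-1) ^+ a.+1).
Proof.
rewrite addSn => abp; rewrite /d_h /concat_cochain abp eqxx mulrz_suml.
by apply: eq_bigr => i _; rewrite seq_pt_catseq_face_lo mulrzAC.
Qed.

Lemma d_v_concat_cochain a b z : (a + b.+1)%N = p ->
  d_v (concat_cochain a b) z = - yface_sum a b.+1 (pt_seq z.1) (pt_seq z.2).
Proof.
rewrite addnS => abp; rewrite /d_v /concat_cochain abp eqxx.
under eq_bigr => i _ do rewrite mulrzAC.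
rewrite -mulrz_suml zsignS mulNrz zsignK; congr (- _); apply: eq_bigr => m _.
by rewrite seq_pt_catseq_face_hi // -abp addSn.
Qed.

Lemma dfixed_concat_cochain (act : G -> A -> A) a b :
  top_module act -> equivariant act f -> dfixed act (concat_cochain a b).
Proof.
move=> hA eqf g z; rewrite /concat_cochain; case: eqP => _; last exact: act0.
by rewrite act_zsign // seq_pt_catseq_tmul eqf.
Qed.

Lemma continuous_concat_cochain a b : continuous f -> continuous (concat_cochain a b).
Proof.
move=> cf; rewrite /concat_cochain; case: eqP => _; last exact: cst_continuous.
apply: continuous_zsign => z; apply: continuous_comp; [exact: continuous_seq_pt_catseq | exact: cf].
Qed.

End Homotopy.

Arguments concat_cochain {G A p} f a b.

Lemma continuous_lc_cont (G : topGroup) (A : topologicalZmodType) p q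
    (F : dcochain G A p q) :
  continuous F -> lc_cont F.
Proof.
by move=> cF; exists setT; split; [exact: filterT | exact: continuous_subspaceT].
Qed.

Theorem mainTheorem5 (G : topGroup) (A : topologicalZmodType)
    (act : G -> A -> A) (hA : top_module act) (p : nat) (f : cochain G A p) :
  Cc act f -> (forall x, dcoch f x = 0) ->
  exists F : totfam G A,
    (forall a b, (a + b).+1 <> p -> forall z, F a b z = 0) /\
    (forall a b, dfixed act (F a b) /\ lc_cont (F a b)) /\
    (forall a b, (a + b)%N = p -> forall z,
        totd F a b z = j_v f a b z - j_h f a b z).
Proof.
move=> [eqf cf] df0; exists (concat_cochain f); split; [|split].
- by move=> a b abp z; rewrite /concat_cochain; case: eqP.
- move=> a b; split; first exact: dfixed_concat_cochain.
  exact/continuous_lc_cont/continuous_concat_cochain.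
move=> a b abp z; have := cocycle_face_sums (pt_seq z.1) (pt_seq z.2) df0 abp.
rewrite /totd /j_v /j_h.
case: a abp z => [|a] abp z; case: b abp z => [|b] abp z /=.
- rewrite addn0 in abp; subst p.
  by rewrite yface_sum0 // xface_sum0 mulr1z => ->; rewrite addr0 subrr.
- rewrite add0n in abp; subst p.
  by rewrite d_v_concat_cochain // xface_sum0 mulr1z => ->; rewrite add0r eqxx sub0r.
- rewrite addn0 in abp; subst p.
  by rewrite yface_sum0 // d_h_concat_cochain ?addn0 // => <-; rewrite eqxx addr0 subr0.
- by rewrite d_h_concat_cochain // d_v_concat_cochain // => ->; rewrite subrr andbF subr0.
Qed.
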